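(* Let $a,b\in\Sigma_d$ and let $p\in\mathbb R^d_+$ satisfy $\min(a_i,b_i)\le p_i\le\max(a_i,b_i)$ for all $1\le i\le d$. Let $c=p/\sum_ip_i\in\Sigma_d$. Then $\max(\|a-c\|_1,\|b-c\|_1)\le\|a-b\|_1$.
   Context: $\Sigma_d=\{p\in\mathbb R^d_+:\sum_ip_i=1\}$ is the probability simplex; $\|\cdot\|_1$ is the $\ell_1$ norm. *)

From mathcomp Require Import all_boot all_order all_algebra.
Set Implicit Arguments. Unset Strict Implicit. Unset Printing Implicit Defensive.
Import Order.TTheory GRing.Theory Num.Theory.
Local Open Scope ring_scope.

Definition in_simplex (R : realFieldType) (d : nat) (p : 'I_d -> R) : Prop :=
  (forall i, 0 <= p i) /\ \sum_(i < d) p i = 1.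

Definition l1norm (R : realFieldType) (d : nat) (x : 'I_d -> R) : R :=
  \sum_(i < d) `|x i|.

From mathcomp Require Import all_boot all_order all_algebra.
From mathcomp Require Import lra.
Import Order.TTheory GRing.Theory Num.Theory.
Set Implicit Arguments.
Unset Strict Implicit.
Unset Printing Implicit Defensive.
Local Open Scope ring_scope.

(* Since p lies coordinatewise between a and b, the triangle inequality
   through p is an equality: |a - b|_1 = |a - p|_1 + |p - b|_1.  Normalising
   p to c moves it by sum_i p_i |1 - 1/S| = |S - 1| in l1 (S = sum_i p_i),
   and |S - 1| = |sum_i (p_i - b_i)| <= |p - b|_1.  Hence
   |a - c|_1 <= |a - p|_1 + |p - c|_1 <= |a - b|_1, and symmetrically for b. *)

Lemma distD_between (R : realDomainType) (x y z : R) :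
  Num.min x y <= z <= Num.max x y -> `|x - z| + `|z - y| = `|x - y|.
Proof.
wlog le_xy : x y / x <= y => [hwlog|].
  case/orP: (le_total x y) => [|le_yx]; first exact: hwlog.
  rewrite minC maxC => /(hwlog y x le_yx).
  rewrite [`|x - y|]distrC => <-.
  by rewrite [`|x - z|]distrC [`|z - y|]distrC addrC.
rewrite (min_idPl le_xy) (max_idPr le_xy) => /andP[le_xz le_zy].
rewrite !ler0_norm ?subr_le0 //; lra.
Qed.

Section L1Norm.
Variables (R : realFieldType) (d : nat).
Implicit Types x y z : 'I_d -> R.

Lemma l1normC x y : l1norm (fun i => x i - y i) = l1norm (fun i => y i - x i).
Proof. by apply: eq_bigr => i _; rewrite distrC. Qed.

Lemma l1norm_triangle x y z :
  l1norm (fun i => x i - z i)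
    <= l1norm (fun i => x i - y i) + l1norm (fun i => y i - z i).
Proof. by rewrite /l1norm -big_split ler_sum // => i _; apply: ler_distD. Qed.

Lemma l1norm_between x y z :
  (forall i, Num.min (x i) (y i) <= z i <= Num.max (x i) (y i)) ->
  l1norm (fun i => x i - y i)
    = l1norm (fun i => x i - z i) + l1norm (fun i => z i - y i).
Proof.
move=> xzy; rewrite /l1norm -big_split.
by apply: eq_bigr => i _ /=; rewrite distD_between.
Qed.

Lemma norm_sumB_le_l1norm x y :
  `|\sum_(i < d) x i - \sum_(i < d) y i| <= l1norm (fun i => x i - y i).
Proof. by rewrite -sumrB; apply: ler_norm_sum. Qed.

(* An equality unless the sum vanishes, in which case x = 0 and 0^-1 = 0 make the left side 0. *)
Lemma l1norm_sub_normalize x :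
  (forall i, 0 <= x i) ->
  l1norm (fun i => x i - x i / \sum_(j < d) x j) <= `|\sum_(j < d) x j - 1|.
Proof.
move=> x_ge0; set S := \sum_(j < d) x j.
have S_ge0 : 0 <= S by apply: sumr_ge0.
have -> : l1norm (fun i => x i - x i / S) = S * `|1 - S^-1|.
  rewrite /l1norm mulr_suml; apply: eq_bigr => i _.
  by rewrite -{1}(mulr1 (x i)) -mulrBr normrM (ger0_norm (x_ge0 i)).
have [->|S_neq0] := eqVneq S 0; first by rewrite mul0r normr_ge0.
by rewrite -{1}(ger0_norm S_ge0) -normrM mulrBr mulr1 divff.
Qed.

Lemma l1norm_sub_normalize_between x y z :
  in_simplex y -> (forall i, 0 <= z i) ->
  (forall i, Num.min (x i) (y i) <= z i <= Num.max (x i) (y i)) ->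
  l1norm (fun i => x i - z i / \sum_(j < d) z j) <= l1norm (fun i => x i - y i).
Proof.
move=> [_ sum_y1] z_ge0 xzy.
apply: le_trans (l1norm_triangle x z _) _.
rewrite (l1norm_between xzy) lerD2l.
apply: le_trans (l1norm_sub_normalize z_ge0) _.
by rewrite -sum_y1 norm_sumB_le_l1norm.
Qed.

End L1Norm.

Theorem lemma5 (R : realFieldType) (d : nat) (a b p : 'I_d -> R) :
  in_simplex a -> in_simplex b ->
  (forall i, 0 <= p i) ->
  (forall i, Num.min (a i) (b i) <= p i /\ p i <= Num.max (a i) (b i)) ->
  let c := fun i => p i / \sum_(j < d) p j in
  Num.max (l1norm (fun i => a i - c i)) (l1norm (fun i => b i - c i))
    <= l1norm (fun i => a i - b i).
Proof.
move=> a_simplex b_simplex p_ge0 p_between /=.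
have p_ab i : Num.min (a i) (b i) <= p i <= Num.max (a i) (b i).
  by have [-> ->] := p_between i.
have p_ba i : Num.min (b i) (a i) <= p i <= Num.max (b i) (a i).
  by rewrite minC maxC p_ab.
rewrite ge_max l1norm_sub_normalize_between //= (l1normC a).
exact: l1norm_sub_normalize_between.
Qed.
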